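(* Let $c\ge 1$ be an integer and $\lambda,\mu,\alpha>0$ with $\rho:=\lambda/(c\mu)<1$. Let $(C,N)$ have the stationary distribution $(\pi_{i,j})$ of the continuous-time Markov chain on $\mathcal S=\{(i,j):0\le i\le c,\ j\ge i\}$ whose only transitions are: $(i,j)\to(i,j+1)$ at rate $\lambda$; $(i,j)\to(i+1,j)$ at rate $\min(j-i,c-i)\alpha$ for $i<c$, $j>i$; $(i,j)\to(i,j-1)$ at rate $i\mu$ for $i\ge1$, $j>i$; $(i,i)\to(i-1,i-1)$ at rate $i\mu$ for $i\ge 1$. Let $Q^{(c)}$ be a random variable with $\mathbb P(Q^{(c)}=k)=\mathbb P(N=c+k\mid C=c)$, $k\ge0$, and let $P_c(z)=\mathbb E[z^{Q^{(c)}}]$. Let $M=\sum_{k\ge1}k\,\pi_{c-1,c-1+k}$ and $p_{c-1,i}=\frac{1}{M}\sum_{k\ge i+1}\pi_{c-1,c-1+k}$ for $i\ge0$. Then $(p_{c-1,i})_{i\ge0}$ is a probability distribution and, for $|z|\le1$, $$P_c(z)=\left(\sum_{i=0}^\infty p_{c-1,i}z^i\right)\frac{1-\rho}{1-\rho z}.$$ Equivalently, $Q^{(c)}$ has the same distribution as $Q_{ON\text{-}IDLE}+Q_{Res}$, where $Q_{ON\text{-}IDLE}$ and $Q_{Res}$ are independent, $\mathbb P(Q_{ON\text{-}IDLE}=n)=(1-\rho)\rho^n$ ($n\ge0$), and $\mathbb P(Q_{Res}=i)=p_{c-1,i}$ ($i\ge0$).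
   Context: The chain models an M/M/$c$ queue with setup times under the ON-OFF policy: $C$ is the number of busy servers and $N$ the number of jobs in the system in steady state; arrivals Poisson($\lambda$), services exp($\mu$), setups exp($\alpha$). Note $p_{c-1,i}=\mathbb P(N-C>i\mid C=c-1)/\mathbb E[N-C\mid C=c-1]$. *)

From Stdlib Require Import Reals Lra Lia Arith.
From Coquelicot Require Import Coquelicot.
Open Scope R_scope.

Definition inS (c i j : nat) : bool := (i <=? c)%nat && (i <=? j)%nat.

Definition indic (b : bool) (x : R) : R := if b then x else 0.

Definition rate (c : nat) (lam mu alpha : R) (i j i' j' : nat) : R :=
    indic ((i' =? i)%nat && (j' =? S j)%nat) lam
  + indic ((i <? c)%nat && (i <? j)%nat && (i' =? S i)%nat && (j' =? j)%nat)
          (INR (Nat.min (j - i) (c - i)) * alpha)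
  + indic ((1 <=? i)%nat && (i <? j)%nat && (i' =? i)%nat && (j' =? pred j)%nat)
          (INR i * mu)
  + indic ((1 <=? i)%nat && (j =? i)%nat && (i' =? pred i)%nat && (j' =? pred i)%nat)
          (INR i * mu).

(* Every transition changes the second coordinate by at most one, so all
   neighbours (predecessors and successors) of (i,j) lie in the finite window
   {(i',j') : i' <= c, j' <= j+1}.  The sums below range over this window,
   hence over all states of S that can interact with (i,j). *)
Definition window_sum (c j : nat) (f : nat -> nat -> R) : R :=
  sum_f_R0 (fun i' => sum_f_R0 (fun j' => f i' j') (S j)) c.

Definition out_rate (c : nat) (lam mu alpha : R) (i j : nat) : R :=
  window_sum c j (fun i' j' =>
    indic (inS c i' j' && negb ((i' =? i)%nat && (j' =? j)%nat))
          (rate c lam mu alpha i j i' j')).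

Definition stationary (c : nat) (lam mu alpha : R) (pi : nat -> nat -> R) : Prop :=
  (forall i j, inS c i j = true -> 0 <= pi i j) /\
  (exists m : nat -> R,
      (forall i, (i <= c)%nat -> is_series (fun k => pi i (i + k)%nat) (m i)) /\
      sum_f_R0 m c = 1) /\
  (forall i j, inS c i j = true ->
     pi i j * out_rate c lam mu alpha i j =
     window_sum c j (fun i' j' =>
       indic (inS c i' j' && negb ((i' =? i)%nat && (j' =? j)%nat))
             (pi i' j' * rate c lam mu alpha i' j' i j))).

Definition probC (c : nat) (pi : nat -> nat -> R) : R :=
  Series (fun k => pi c (c + k)%nat).

Definition qc (c : nat) (pi : nat -> nat -> R) (k : nat) : R :=
  pi c (c + k)%nat / probC c pi.

Definition Mc (c : nat) (pi : nat -> nat -> R) : R :=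
  Series (fun k => INR k * pi (c - 1)%nat (c - 1 + k)%nat).

Definition pres (c : nat) (pi : nat -> nat -> R) (i : nat) : R :=
  Series (fun m => pi (c - 1)%nat (c - 1 + (i + 1 + m))%nat) / Mc c pi.

(* Write x_k = pi_{c,c+k} and g_k = pi_{c-1,c-1+k}, and let T_i = sum_{k>i} g_k be the rate
   (divided by alpha) at which setups complete into row c above level i.  Summing the balance
   equations of row c over the levels 0..n gives the level-crossing equations
   c mu x_0 = alpha T_0 and c mu x_{n+1} = lam x_n + alpha T_{n+1}.  Summing these once more,
   sum_i T_i = (c mu - lam) P(C = c) / alpha, which by summation by parts is also M; hence
   p_{c-1,i} = T_i / M is a distribution, and the law q of Q^(c) satisfies
   q_{n+1} = rho q_n + (1 - rho) p_{n+1}: it is p filtered through a geometric law, which gives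
   both the convolution formula and the generating-function identity.  P(C = c) > 0 because
   zero mass in row c would propagate through the balance equations to every row. *)

From Stdlib Require Import Reals Lra Lia.
From Coquelicot Require Import Coquelicot.
Open Scope R_scope.
Set Bullet Behavior "Strict Subproofs".

Lemma is_series_partial_sums (a : nat -> R) (l : R) :
  is_series a l <-> is_lim_seq (fun n => sum_f_R0 a n) l.
Proof. rewrite is_series_Reals, is_lim_seq_Reals. reflexivity. Qed.

Lemma is_lim_seq_unique_real (u : nat -> R) (a b : R) :
  is_lim_seq u a -> is_lim_seq u b -> a = b.
Proof.
  intros Ha Hb. apply is_lim_seq_unique in Ha, Hb. rewrite Ha in Hb. now injection Hb.
Qed.

Lemma partial_sum_le_series (a : nat -> R) (l : R) (n : nat) :
  (forall k, 0 <= a k) -> is_series a l -> sum_f_R0 a n <= l.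
Proof. intros Ha Hl. apply is_series_Reals in Hl. exact (sum_incr a n l Hl Ha). Qed.

Lemma is_series_unique_real (a : nat -> R) (l l' : R) :
  is_series a l -> is_series a l' -> l = l'.
Proof. intros H H'. now rewrite <- (is_series_unique a l H), <- (is_series_unique a l' H'). Qed.

Lemma is_series_zero : is_series (fun _ : nat => 0) 0.
Proof.
  apply is_series_partial_sums, is_lim_seq_ext with (u := fun _ => 0); [|apply is_lim_seq_const].
  intros n. symmetry. now apply sum_eq_R0.
Qed.

Lemma nonneg_series_eq0 (a : nat -> R) :
  (forall k, 0 <= a k) -> is_series a 0 -> forall k, a k = 0.
Proof.
  intros Ha H [|k]; pose proof (fun n => partial_sum_le_series a 0 n Ha H) as Hle.
  - specialize (Hle 0%nat). specialize (Ha 0%nat). simpl in Hle. lra.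
  - specialize (Hle (S k)). rewrite tech5 in Hle.
    pose proof (cond_pos_sum a k Ha). specialize (Ha (S k)). lra.
Qed.

Lemma nonincreasing_gap_le (T : nat -> R) (h d : nat) : (forall n, T (S n) <= T n) ->
  INR d * T (h + d)%nat <= sum_f_R0 T (h + d) - sum_f_R0 T h.
Proof.
  intros Hdec. induction d as [|d IH].
  - rewrite Nat.add_0_r. simpl. lra.
  - replace (h + S d)%nat with (S (h + d)) by lia. rewrite tech5, S_INR.
    specialize (Hdec (h + d)%nat). assert (0 <= INR d) by apply pos_INR. nra.
Qed.

(* Olivier's theorem: n T_n <= 2 (sum_{i<=n} T_i - sum_{i<=n/2} T_i), a Cauchy difference. *)
Lemma nonincreasing_series_INR_mult_lim0 (T : nat -> R) (s : R) :
  (forall n, 0 <= T n) -> (forall n, T (S n) <= T n) -> is_series T s ->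
  is_lim_seq (fun n => INR n * T n) 0.
Proof.
  intros Hpos Hdec Hs. apply is_series_Reals in Hs. apply is_lim_seq_Reals.
  intros eps Heps. destruct (Hs (eps / 4)) as [N HN]; [lra|].
  exists (2 * N)%nat. intros n Hn.
  pose proof (Nat.div_mod_eq n 2). pose proof (Nat.mod_upper_bound n 2 ltac:(lia)).
  set (h := (n / 2)%nat) in *.
  pose proof (nonincreasing_gap_le T h (n - h) Hdec) as Hgap.
  replace (h + (n - h))%nat with n in Hgap by lia.
  assert (Hhalf : INR n <= 2 * INR (n - h)).
  { replace 2 with (INR 2) by reflexivity. rewrite <- mult_INR. apply le_INR. lia. }
  pose proof (HN n ltac:(lia)) as H1. pose proof (HN h ltac:(lia)) as H2.
  unfold R_dist in *. apply Rabs_def2 in H1, H2.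
  assert (0 <= INR n * T n) by (apply Rmult_le_pos; [apply pos_INR | apply Hpos]).
  rewrite Rminus_0_r, Rabs_pos_eq by lra.
  assert (INR n * T n <= 2 * (INR (n - h) * T n)) by (specialize (Hpos n); nra).
  lra.
Qed.

(* Summation by parts; the boundary term n T_n vanishes by Olivier's theorem. *)
Lemma is_series_INR_mult_tails (g : nat -> R) (G s : R) :
  (forall n, 0 <= g n) -> is_series g G ->
  is_series (fun i => G - sum_f_R0 g i) s -> is_series (fun k => INR k * g k) s.
Proof.
  intros Hg HG Hs. set (T := fun i => G - sum_f_R0 g i) in *.
  assert (Tpos : forall i, 0 <= T i).
  { intros i. unfold T. pose proof (partial_sum_le_series g G i Hg HG). lra. }
  assert (Tdec : forall n, T (S n) <= T n).
  { intros n. unfold T. rewrite tech5. specialize (Hg (S n)). lra. }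
  assert (Hparts : forall n,
    sum_f_R0 (fun k => INR k * g k) (S n) = sum_f_R0 T n - INR (S n) * T (S n)).
  { induction n as [|n IH]; unfold T in *.
    - simpl. lra.
    - rewrite tech5, IH, !tech5, !S_INR. ring. }
  apply is_series_partial_sums, is_lim_seq_incr_1.
  apply is_lim_seq_ext with (u := fun n => sum_f_R0 T n - INR (S n) * T (S n)).
  { intros n. now rewrite Hparts. }
  replace s with (s - 0) by ring.
  apply is_lim_seq_minus'.
  - now apply is_series_partial_sums.
  - apply (is_lim_seq_incr_1 (fun n => INR n * T n) 0).
    exact (nonincreasing_series_INR_mult_lim0 T s Tpos Tdec Hs).
Qed.

(* [x] and [g] play the roles of rows c and c-1; the hypotheses are the balance equations
   of row c. *)
Section Level_crossing.

Variables (lam A alpha X G : R) (x g : nat -> R).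
Hypotheses (Halpha : 0 < alpha) (Hx : is_series x X) (Hg : is_series g G).
Hypothesis balance_0 : (lam + A) * x 0%nat = alpha * g 1%nat + A * x 1%nat.
Hypothesis balance_S : forall k,
  (lam + A) * x (S k) = lam * x k + alpha * g (S (S k)) + A * x (S (S k)).

Lemma flux_telescope n :
  A * x (S n) - lam * x n = A * x 0%nat - alpha * (sum_f_R0 g (S n) - g 0%nat).
Proof.
  induction n as [|n IH].
  - simpl. lra.
  - rewrite tech5. specialize (balance_S n). lra.
Qed.

Lemma level_crossing_0 : A * x 0%nat = alpha * (G - sum_f_R0 g 0).
Proof.
  assert (Hx0 : is_lim_seq x 0) by (apply ex_series_lim_0; now exists X).
  assert (Lleft : is_lim_seq (fun n => A * x (S n) - lam * x n) (A * 0 - lam * 0)).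
  { apply is_lim_seq_minus'.
    - apply (is_lim_seq_scal_l (fun n => x (S n)) A 0), (is_lim_seq_incr_1 x 0), Hx0.
    - apply (is_lim_seq_scal_l x lam 0), Hx0. }
  assert (Lright : is_lim_seq (fun n => A * x 0%nat - alpha * (sum_f_R0 g (S n) - g 0%nat))
                     (A * x 0%nat - alpha * (G - g 0%nat))).
  { apply is_lim_seq_minus'; [apply is_lim_seq_const|].
    apply (is_lim_seq_scal_l _ alpha (G - g 0%nat)).
    apply is_lim_seq_minus'; [|apply is_lim_seq_const].
    apply (is_lim_seq_incr_1 (fun n => sum_f_R0 g n) G), is_series_partial_sums, Hg. }
  pose proof (is_lim_seq_unique_real _ _ _ Lleft
                (is_lim_seq_ext _ _ _ (fun n => eq_sym (flux_telescope n)) Lright)).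
  simpl. lra.
Qed.

Lemma level_crossing_S n : A * x (S n) = lam * x n + alpha * (G - sum_f_R0 g (S n)).
Proof.
  pose proof (flux_telescope n). pose proof level_crossing_0.
  simpl in *. lra.
Qed.

Lemma is_series_tails : is_series (fun i => G - sum_f_R0 g i) ((A - lam) * X / alpha).
Proof.
  assert (Hx0 : is_lim_seq x 0) by (apply ex_series_lim_0; now exists X).
  assert (Hsum : forall n,
    alpha * sum_f_R0 (fun i => G - sum_f_R0 g i) n = A * sum_f_R0 x n - lam * (sum_f_R0 x n - x n)).
  { induction n as [|n IH].
    - pose proof level_crossing_0. simpl in *. lra.
    - rewrite (tech5 (fun i => G - sum_f_R0 g i)), (tech5 x). pose proof (level_crossing_S n). lra. }
  apply is_series_partial_sums.
  apply is_lim_seq_ext with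
    (u := fun n => (A * sum_f_R0 x n - lam * (sum_f_R0 x n - x n)) / alpha).
  { intros n. rewrite <- Hsum. field. lra. }
  replace ((A - lam) * X / alpha) with ((A * X - lam * (X - 0)) / alpha) by (field; lra).
  apply (is_lim_seq_scal_r _ (/ alpha) (A * X - lam * (X - 0))).
  apply is_series_partial_sums in Hx.
  apply is_lim_seq_minus'.
  - apply (is_lim_seq_scal_l _ A X), Hx.
  - apply (is_lim_seq_scal_l _ lam (X - 0)), is_lim_seq_minus'; assumption.
Qed.

End Level_crossing.
Lemma sum_f_R0_extract (F : nat -> R) (n a : nat) : (a <= n)%nat ->
  sum_f_R0 F n = F a + sum_f_R0 (fun i => if (i =? a)%nat then 0 else F i) n.
Proof.
  induction n as [|n IH]; intros Ha.
  - replace a with 0%nat by lia. simpl. lra.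
  - rewrite !tech5. destruct (Nat.eq_dec a (S n)) as [->|Hne].
    + rewrite Nat.eqb_refl.
      rewrite (sum_eq (fun i => if (i =? S n)%nat then 0 else F i) F n).
      * lra.
      * intros i Hi. destruct (Nat.eqb_spec i (S n)); [lia | reflexivity].
    + rewrite IH by lia. destruct (Nat.eqb_spec (S n) a); [lia|]. lra.
Qed.

Lemma window_sum_extract c j f a b : (a <= c)%nat -> (b <= S j)%nat ->
  window_sum c j f = f a b + window_sum c j (fun i' j' =>
     if ((i' =? a)%nat && (j' =? b)%nat)%bool then 0 else f i' j').
Proof.
  intros Ha Hb. unfold window_sum.
  rewrite (sum_f_R0_extract _ c a Ha), (sum_f_R0_extract (fun j' => f a j') (S j) b Hb).
  rewrite (sum_f_R0_extract (fun i' => sum_f_R0 (fun j' =>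
     if ((i' =? a)%nat && (j' =? b)%nat)%bool then 0 else f i' j') (S j)) c a Ha).
  rewrite Nat.eqb_refl, Rplus_assoc. f_equal. f_equal.
  apply sum_eq. intros i Hi. now destruct (Nat.eqb_spec i a).
Qed.

Lemma window_sum_eq0 c j f :
  (forall i' j', (i' <= c)%nat -> (j' <= S j)%nat -> f i' j' = 0) -> window_sum c j f = 0.
Proof.
  intros H. apply sum_eq_R0. intros i Hi. apply sum_eq_R0. intros. apply H; lia.
Qed.

Lemma window_sum_ge c j f a b : (forall i' j', 0 <= f i' j') ->
  (a <= c)%nat -> (b <= S j)%nat -> f a b <= window_sum c j f.
Proof.
  intros H Ha Hb. rewrite (window_sum_extract c j f a b Ha Hb).
  enough (0 <= window_sum c j (fun i' j' =>
            if ((i' =? a)%nat && (j' =? b)%nat)%bool then 0 else f i' j')) by lra.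
  apply cond_pos_sum. intros. apply cond_pos_sum. intros.
  destruct (_ && _)%bool; [lra | apply H].
Qed.

Ltac decide_nat_tests :=
  repeat (cbn [andb negb orb indic] in *;
   match goal with
   | |- context [Nat.eqb ?x ?y] => destruct (Nat.eqb_spec x y); try lia
   | |- context [Nat.ltb ?x ?y] => destruct (Nat.ltb_spec x y); try lia
   | |- context [Nat.leb ?x ?y] => destruct (Nat.leb_spec x y); try lia
   end); cbn [andb negb orb indic] in *.

Definition in_rate c lam mu alpha (pi : nat -> nat -> R) i j :=
  window_sum c j (fun i' j' =>
    indic (inS c i' j' && negb ((i' =? i)%nat && (j' =? j)%nat))
          (pi i' j' * rate c lam mu alpha i' j' i j)).

Lemma rate_nonneg c lam mu alpha i j i' j' : 0 <= lam -> 0 <= mu -> 0 <= alpha ->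
  0 <= rate c lam mu alpha i j i' j'.
Proof.
  intros. unfold rate.
  assert (0 <= INR i * mu) by (apply Rmult_le_pos; [apply pos_INR | lra]).
  assert (0 <= INR (Nat.min (j - i) (c - i)) * alpha) by (apply Rmult_le_pos; [apply pos_INR | lra]).
  repeat apply Rplus_le_le_0_compat; unfold indic; destruct (_ && _)%bool; lra.
Qed.

Section Top_level_balance.

Variables (c : nat) (lam mu alpha : R) (pi : nat -> nat -> R).
Hypothesis Hc : (1 <= c)%nat.

Lemma out_rate_top k : out_rate c lam mu alpha c (c + k) = lam + INR c * mu.
Proof.
  unfold out_rate. rewrite (window_sum_extract _ _ _ c (S (c + k))) by lia.
  destruct k as [|k].
  - rewrite (window_sum_extract _ _ _ (c - 1) (c - 1)) by lia.
    rewrite window_sum_eq0 by (intros; unfold rate, inS; decide_nat_tests; lra).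
    unfold rate, inS. decide_nat_tests. lra.
  - rewrite (window_sum_extract _ _ _ c (c + k)) by lia.
    rewrite window_sum_eq0 by (intros; unfold rate, inS; decide_nat_tests; lra).
    unfold rate, inS. decide_nat_tests. lra.
Qed.

(* From (c-1, j), j >= c, setups complete at rate min(j-c+1, 1) alpha = alpha. *)
Lemma in_rate_top_0 :
  in_rate c lam mu alpha pi c c = alpha * pi (c - 1)%nat c + INR c * mu * pi c (S c).
Proof.
  unfold in_rate.
  rewrite (window_sum_extract _ _ _ c (S c)), (window_sum_extract _ _ _ (c - 1) c) by lia.
  rewrite window_sum_eq0 by (intros; unfold rate, inS; decide_nat_tests; lra).
  unfold rate, inS. decide_nat_tests.
  all: replace (Nat.min (c - (c - 1)) (c - (c - 1))) with 1%nat by lia; simpl; lra.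
Qed.

Lemma in_rate_top_S k :
  in_rate c lam mu alpha pi c (c + S k) =
  lam * pi c (c + k)%nat + alpha * pi (c - 1)%nat (c + S k)%nat
  + INR c * mu * pi c (S (c + S k)).
Proof.
  unfold in_rate.
  rewrite (window_sum_extract _ _ _ c (S (c + S k))), (window_sum_extract _ _ _ (c - 1) (c + S k)),
    (window_sum_extract _ _ _ c (c + k)) by lia.
  rewrite window_sum_eq0 by (intros; unfold rate, inS; decide_nat_tests; lra).
  unfold rate, inS. decide_nat_tests.
  all: replace (Nat.min (c + S k - (c - 1)) (c - (c - 1))) with 1%nat by lia; simpl; lra.
Qed.

End Top_level_balance.

Section Stationary.

Variables (c : nat) (lam mu alpha : R) (pi : nat -> nat -> R).
Hypotheses (Hc : (1 <= c)%nat) (Hlam : 0 < lam) (Hmu : 0 < mu) (Halpha : 0 < alpha).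
Hypothesis Hpi : stationary c lam mu alpha pi.

Lemma stationary_nonneg i j : inS c i j = true -> 0 <= pi i j.
Proof. apply Hpi. Qed.

Lemma stationary_balance i j : inS c i j = true ->
  pi i j * out_rate c lam mu alpha i j = in_rate c lam mu alpha pi i j.
Proof. apply Hpi. Qed.

(* A state of zero mass receives no flow, so its predecessors have zero mass. *)
Lemma stationary_pred_zero i j a b :
  inS c i j = true -> pi i j = 0 -> inS c a b = true -> (b <= S j)%nat ->
  ((a =? i)%nat && (b =? j)%nat)%bool = false ->
  0 < rate c lam mu alpha a b i j -> pi a b = 0.
Proof.
  intros Hij Hz Hab Hbj Hne Hr.
  pose proof (stationary_balance i j Hij) as Hbal. rewrite Hz, Rmult_0_l in Hbal.
  assert (Hf : forall i' j', 0 <= indic (inS c i' j' && negb ((i' =? i)%nat && (j' =? j)%nat))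
                                        (pi i' j' * rate c lam mu alpha i' j' i j)).
  { intros i' j'. destruct (inS c i' j') eqn:E; simpl; [|lra].
    destruct (negb _); simpl; [|lra].
    apply Rmult_le_pos; [now apply stationary_nonneg | apply rate_nonneg; lra]. }
  assert (Hac : (a <= c)%nat)
    by (unfold inS in Hab; apply andb_prop in Hab; apply Nat.leb_le; tauto).
  pose proof (window_sum_ge c j _ a b Hf Hac Hbj) as Hle. fold (in_rate c lam mu alpha pi i j) in Hle.
  rewrite <- Hbal, Hab, Hne in Hle. simpl in Hle.
  pose proof (stationary_nonneg a b Hab). nra.
Qed.

Lemma stationary_row_zero_pred i : (1 <= i)%nat -> (i <= c)%nat ->
  (forall k, pi i (i + k)%nat = 0) -> forall k, pi (i - 1)%nat (i - 1 + k)%nat = 0.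
Proof.
  intros Hi Hic Hz.
  assert (Hsetup : forall k, pi (i - 1)%nat (i + k)%nat = 0).
  { intros k. apply (stationary_pred_zero i (i + k)); auto; try lia.
    all: try (unfold inS; now decide_nat_tests).
    unfold rate. decide_nat_tests.
    all: assert (0 < INR (Nat.min (i + k - (i - 1)) (c - (i - 1)))) by (apply lt_0_INR; lia).
    all: nra. }
  intros [|k].
  - rewrite Nat.add_0_r. apply (stationary_pred_zero (i - 1) i); auto; try lia.
    all: try (unfold inS; now decide_nat_tests).
    + rewrite <- (Nat.add_0_r i) at 2. apply Hsetup.
    + unfold rate. decide_nat_tests.
      all: assert (0 <= INR (Nat.min (i - (i - 1)) (c - (i - 1)))) by apply pos_INR.
      all: assert (0 <= INR (i - 1)) by apply pos_INR.
      all: nra.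
  - replace (i - 1 + S k)%nat with (i + k)%nat by lia. apply Hsetup.
Qed.

Lemma is_series_row i : (i <= c)%nat ->
  is_series (fun k => pi i (i + k)%nat) (Series (fun k => pi i (i + k)%nat)).
Proof.
  intros Hi. destruct Hpi as [_ [[m [Hm _]] _]].
  rewrite (is_series_unique _ _ (Hm i Hi)). now apply Hm.
Qed.

Lemma probC_pos : 0 < probC c pi.
Proof.
  set (x := fun k => pi c (c + k)%nat).
  assert (Hx : is_series x (probC c pi)) by (apply is_series_row; lia).
  assert (Hxpos : forall k, 0 <= x k)
    by (intros; apply stationary_nonneg; unfold inS; now decide_nat_tests).
  pose proof (partial_sum_le_series x _ 0 Hxpos Hx) as Hge. simpl in Hge.
  destruct (Rle_lt_or_eq_dec 0 (probC c pi)) as [|Hz]; [specialize (Hxpos 0%nat); lra | easy |].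
  exfalso. rewrite <- Hz in Hx.
  assert (Hall : forall d, (d <= c)%nat -> forall k, pi (c - d)%nat (c - d + k)%nat = 0).
  { induction d as [|d IH]; intros Hd.
    - rewrite Nat.sub_0_r. exact (nonneg_series_eq0 x Hxpos Hx).
    - replace (c - S d)%nat with (c - d - 1)%nat by lia.
      apply stationary_row_zero_pred; try lia. apply IH. lia. }
  destruct Hpi as [_ [[m [Hm Hmass]] _]].
  rewrite sum_eq_R0 in Hmass; [lra|].
  intros i Hi. apply (is_series_unique_real (fun k => pi i (i + k)%nat)); [now apply Hm|].
  apply is_series_ext with (a := fun _ => 0); [|apply is_series_zero].
  intros k. specialize (Hall (c - i)%nat ltac:(lia) k).
  now replace (c - (c - i))%nat with i in Hall by lia.
Qed.

Let A := INR c * mu.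
Let x k := pi c (c + k)%nat.
Let g k := pi (c - 1)%nat (c - 1 + k)%nat.
Let G := Series g.

Lemma is_series_top_row : is_series x (probC c pi).
Proof. apply is_series_row. lia. Qed.

Lemma is_series_pred_row : is_series g G.
Proof. apply is_series_row. lia. Qed.

Lemma pred_row_nonneg k : 0 <= g k.
Proof. apply stationary_nonneg. unfold inS. now decide_nat_tests. Qed.

Lemma balance_top_0 : (lam + A) * x 0%nat = alpha * g 1%nat + A * x 1%nat.
Proof.
  pose proof (stationary_balance c c ltac:(unfold inS; now decide_nat_tests)) as H.
  pose proof (out_rate_top c lam mu alpha Hc 0) as Hout. rewrite Nat.add_0_r in Hout.
  rewrite Hout, in_rate_top_0 in H by lia.
  unfold x, g, A. rewrite Nat.add_0_r.
  replace (c - 1 + 1)%nat with c by lia. replace (c + 1)%nat with (S c) by lia. lra.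
Qed.

Lemma balance_top_S k :
  (lam + A) * x (S k) = lam * x k + alpha * g (S (S k)) + A * x (S (S k)).
Proof.
  pose proof (stationary_balance c (c + S k) ltac:(unfold inS; now decide_nat_tests)) as H.
  rewrite out_rate_top, in_rate_top_S in H by lia.
  unfold x, g, A. replace (c - 1 + S (S k))%nat with (c + S k)%nat by lia.
  replace (c + S (S k))%nat with (S (c + S k)) by lia. lra.
Qed.

Lemma is_series_pred_row_tails :
  is_series (fun i => G - sum_f_R0 g i) ((A - lam) * probC c pi / alpha).
Proof.
  exact (is_series_tails lam A alpha _ _ x g Halpha is_series_top_row is_series_pred_row
           balance_top_0 balance_top_S).
Qed.

Lemma Mc_eq : Mc c pi = (A - lam) * probC c pi / alpha.
Proof.
  apply is_series_unique, (is_series_INR_mult_tails g G).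
  - exact pred_row_nonneg.
  - exact is_series_pred_row.
  - exact is_series_pred_row_tails.
Qed.

Lemma pres_eq i : pres c pi i = (G - sum_f_R0 g i) / Mc c pi.
Proof.
  unfold pres. f_equal. apply is_series_unique.
  apply (is_series_ext (fun k => g (S i + k)%nat)).
  2:{ apply is_series_incr_n; [lia|]. rewrite sum_n_Reals. simpl pred.
      replace (plus _ _) with G by (change plus with Rplus; ring). exact is_series_pred_row. }
  intros k. unfold g. f_equal. lia.
Qed.

Hypothesis Hrho : lam / (INR c * mu) < 1.

Lemma lam_lt_service_rate : lam < A.
Proof.
  assert (HA : 0 < A) by (apply Rmult_lt_0_compat; [apply lt_0_INR; lia | lra]).
  unfold A in *. set (s := INR c * mu) in *.
  pose proof (Rmult_lt_compat_r s _ _ HA Hrho) as H.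
  replace (lam / s * s) with lam in H by (field; lra). lra.
Qed.

Lemma Mc_pos : 0 < Mc c pi.
Proof.
  rewrite Mc_eq. pose proof lam_lt_service_rate. pose proof probC_pos.
  apply Rdiv_lt_0_compat; [apply Rmult_lt_0_compat|]; lra.
Qed.

Lemma pres_distribution : (forall i, 0 <= pres c pi i) /\ is_series (pres c pi) 1.
Proof.
  pose proof Mc_pos as HM. split.
  - intros i. rewrite pres_eq. apply Rdiv_le_0_compat; [|exact HM].
    pose proof (partial_sum_le_series g G i pred_row_nonneg is_series_pred_row). lra.
  - apply (is_series_ext (fun i => (G - sum_f_R0 g i) * / Mc c pi)).
    { intros i. now rewrite pres_eq. }
    replace 1 with (Mc c pi * / Mc c pi) by (field; lra).
    apply is_series_scal_r. rewrite Mc_eq. exact is_series_pred_row_tails.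
Qed.

Lemma qc_distribution : (forall n, 0 <= qc c pi n) /\ is_series (qc c pi) 1.
Proof.
  pose proof probC_pos as HX. split.
  - intros n. apply Rdiv_le_0_compat; [|exact HX].
    apply stationary_nonneg. unfold inS. now decide_nat_tests.
  - apply (is_series_ext (fun n => x n * / probC c pi)); [reflexivity|].
    replace 1 with (probC c pi * / probC c pi) by (field; lra).
    apply is_series_scal_r, is_series_top_row.
Qed.

Lemma qc_recursion : let rho := lam / A in
  qc c pi 0%nat = (1 - rho) * pres c pi 0%nat /\
  forall n, qc c pi (S n) = rho * qc c pi n + (1 - rho) * pres c pi (S n).
Proof.
  pose proof probC_pos as HX. pose proof lam_lt_service_rate as HlamA.
  assert (HA : 0 < A) by lra.
  pose proof (level_crossing_0 lam A alpha (probC c pi) G x g is_series_top_row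
                is_series_pred_row balance_top_0 balance_top_S) as H0.
  pose proof (level_crossing_S lam A alpha (probC c pi) G x g is_series_top_row
                is_series_pred_row balance_top_0 balance_top_S) as HS.
  intros rho. unfold qc, rho. split; [|intros n; specialize (HS n)]; rewrite !pres_eq, Mc_eq.
  - fold (x 0%nat).
    replace (x 0%nat) with (alpha * (G - sum_f_R0 g 0) / A) by (rewrite <- H0; field; lra).
    field. repeat split; lra.
  - fold (x n) (x (S n)).
    replace (x (S n)) with ((lam * x n + alpha * (G - sum_f_R0 g (S n))) / A)
      by (rewrite <- HS; field; lra).
    field. repeat split; lra.
Qed.

End Stationary.

Lemma ex_series_scal_Cpow (r : nat -> R) (z : C) :
  (forall n, 0 <= r n) -> ex_series r -> Cmod z <= 1 ->
  ex_series (fun n => (RtoC (r n) * Cpow z n)%C).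
Proof.
  intros Hr Hs Hz. apply (ex_series_le (V := C_CompleteNormedModule) _ r); [|exact Hs].
  intros n. change (Cmod (RtoC (r n) * Cpow z n)%C <= r n).
  rewrite Cmod_mult, Cmod_pow, Cmod_R, Rabs_pos_eq by apply Hr.
  assert (Cmod z ^ n <= 1).
  { rewrite <- (pow1 n). apply pow_incr. split; [apply Cmod_ge_0 | exact Hz]. }
  specialize (Hr n). nra.
Qed.

Section Geometric_filter.

Variables (rho : R) (p q : nat -> R).
Hypothesis filter_0 : q 0%nat = (1 - rho) * p 0%nat.
Hypothesis filter_S : forall n, q (S n) = rho * q n + (1 - rho) * p (S n).

Lemma geometric_filter_convolution n :
  q n = sum_f_R0 (fun i => p i * ((1 - rho) * rho ^ (n - i))) n.
Proof.
  induction n as [|n IH].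
  - simpl. rewrite filter_0. ring.
  - rewrite tech5, filter_S, IH, Nat.sub_diag, scal_sum.
    replace (sum_f_R0 _ n) with (sum_f_R0 (fun i => p i * ((1 - rho) * rho ^ (S n - i))) n).
    + simpl. ring.
    + apply sum_eq. intros i Hi. replace (S n - i)%nat with (S (n - i)) by lia. simpl. ring.
Qed.

(* Multiplying the series of [q] by [1 - rho z] telescopes it into [(1 - rho)] times the
   series of [p]. *)
Lemma geometric_filter_generating_function (z : C) :
  0 <= rho < 1 -> Cmod z <= 1 ->
  (forall i, 0 <= p i) -> ex_series p -> (forall i, 0 <= q i) -> ex_series q ->
  exists s : C,
    is_series (fun i => (RtoC (p i) * Cpow z i)%C) s /\
    is_series (fun k => (RtoC (q k) * Cpow z k)%C) (s * (RtoC (1 - rho) / (1 - RtoC rho * z)))%C.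
Proof.
  intros Hrho Hz Hp Hps Hq Hqs.
  destruct (ex_series_scal_Cpow p z Hp Hps Hz) as [s Hs].
  destruct (ex_series_scal_Cpow q z Hq Hqs Hz) as [sq Hsq]. change C in s, sq.
  exists s. split; [exact Hs|].
  set (a := fun k => (RtoC (q k) * Cpow z k)%C) in *.
  set (a_shift := fun k : nat => match k with 0%nat => RtoC 0 | S k => a k end).
  set (w := (RtoC rho * z)%C).
  assert (Hshift : is_series a_shift sq).
  { apply is_series_decr_1.
    match goal with |- is_series _ ?v => replace v with sq end; [exact Hsq|].
    simpl. change (sq = sq + - 0)%C. ring. }
  assert (Hdiff := is_series_minus _ _ _ _ Hsq (is_series_scal w _ _ Hshift)).
  assert (Htelescope : forall n, plus (a n) (opp (scal w (a_shift n))) =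
                                 scal (RtoC (1 - rho)) (RtoC (p n) * Cpow z n)%C).
  { intros [|n]; change plus with Cplus; change opp with Copp; change scal with Cmult;
      unfold a_shift, a, w.
    - rewrite filter_0, RtoC_mult. simpl.
      match goal with |- ?l = ?r => change (@eq C l r) end. ring.
    - rewrite filter_S, RtoC_plus, !RtoC_mult, Cpow_S.
      match goal with |- ?l = ?r => change (@eq C l r) end. ring. }
  apply (is_series_ext _ _ _ Htelescope) in Hdiff.
  assert (E := filterlim_locally_unique _ _ _ Hdiff (is_series_scal (RtoC (1 - rho)) _ s Hs)).
  change plus with Cplus in E; change opp with Copp in E; change scal with Cmult in E.
  assert (Hw : (1 - w)%C <> 0%C).
  { intros Hw0. assert (Ew : w = 1%C).
    { transitivity (1 - (1 - w))%C; [ring|]. rewrite Hw0. ring. }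
    apply (f_equal Cmod) in Ew. unfold w in Ew.
    rewrite Cmod_mult, Cmod_R, Cmod_1, Rabs_pos_eq in Ew by lra.
    pose proof (Cmod_ge_0 z). nra. }
  replace (s * (RtoC (1 - rho) / (1 - w)))%C with sq; [exact Hsq|].
  transitivity ((sq + - (w * sq)) / (1 - w))%C.
  - field. exact Hw.
  - rewrite E. field. exact Hw.
Qed.

End Geometric_filter.

Theorem mainTheorem3 (c : nat) (lam mu alpha : R) (pi : nat -> nat -> R) :
  (1 <= c)%nat -> 0 < lam -> 0 < mu -> 0 < alpha ->
  lam / (INR c * mu) < 1 ->
  stationary c lam mu alpha pi ->
  let rho := lam / (INR c * mu) in
  ((forall i, 0 <= pres c pi i) /\ is_series (pres c pi) 1) /\
  (forall z : C, Cmod z <= 1 ->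
     exists s : C,
       is_series (fun i => (RtoC (pres c pi i) * Cpow z i)%C) s /\
       is_series (fun k => (RtoC (qc c pi k) * Cpow z k)%C)
                 (s * (RtoC (1 - rho) / (1 - RtoC rho * z)))%C) /\
  (forall n : nat,
     qc c pi n = sum_f_R0 (fun i => pres c pi i * ((1 - rho) * rho ^ (n - i))) n).
Proof.
  intros Hc Hlam Hmu Halpha Hrho Hpi rho.
  pose proof (pres_distribution c lam mu alpha pi Hc Hlam Hmu Halpha Hpi Hrho) as Hpres.
  destruct (qc_distribution c lam mu alpha pi Hc Hlam Hmu Halpha Hpi) as [Hqc_nonneg Hqc].
  destruct (qc_recursion c lam mu alpha pi Hc Hlam Hmu Halpha Hpi Hrho) as [Hq0 HqS].
  assert (Hrho_nonneg : 0 <= rho).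
  { apply Rlt_le, Rdiv_lt_0_compat; [|apply Rmult_lt_0_compat; [apply lt_0_INR|]]; lia || lra. }
  split; [exact Hpres|]. split.
  - intros z Hz. apply (geometric_filter_generating_function rho _ _ Hq0 HqS); try easy.
    + now exists 1.
    + now exists 1.
  - exact (geometric_filter_convolution rho _ _ Hq0 HqS).
Qed.
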